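(* Let $k\ge 2$ and let $P=(p_1,\dots,p_k)$ and $Q=(q_1,\dots,q_k)$ be two multinomial (categorical) probability distributions over the same index set $\{1,\dots,k\}$. Suppose the indices of the largest probabilities of $P$ and $Q$ do not match, i.e. $\arg\max_i p_i \neq \arg\max_j q_j$. Then $$d_{KL}(Q,P)\;\ge\; -\log\bigl(2\sqrt{p_{(1)}p_{(2)}}+1-p_{(1)}-p_{(2)}\bigr),$$ where $p_{(1)}$ and $p_{(2)}$ denote the first and second largest probabilities among $p_1,\dots,p_k$.
   Context: The Kullback–Leibler divergence is $d_{KL}(Q,P)=\sum_{i=1}^k q_i\log\frac{q_i}{p_i}$ (with the usual conventions $0\log 0=0$, and $d_{KL}=+\infty$ if some $q_i>0=p_i$). *)

From HB Require Import structures.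
From mathcomp Require Import all_boot all_order all_algebra.
From mathcomp Require Import all_classical all_reals.
From mathcomp Require Import ereal sequences exp.
Set Implicit Arguments. Unset Strict Implicit. Unset Printing Implicit Defensive.
Import Order.TTheory GRing.Theory Num.Theory.
Local Open Scope ring_scope.
Local Open Scope ereal_scope.

Definition is_distr (R : realType) (k : nat) (p : 'I_k -> R) : Prop :=
  (forall i, (0 <= p i)%R) /\ (\sum_(i < k) p i)%R = 1%R.

Definition dKL (R : realType) (k : nat) (q p : 'I_k -> R) : \bar R :=
  if [exists i, (0 < q i)%R && (p i == 0%R)] then +oo
  else (\sum_(i < k) (if q i == 0%R then 0%R else q i * ln (q i / p i)))%:E.

Definition neglog (R : realType) (x : R) : \bar R :=
  if x == 0%R then +oo else (- ln x)%:E.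

Definition sorted_probs (R : realType) (k : nat) (p : 'I_k -> R) : seq R :=
  sort (fun x y : R => (y <= x)%R) [seq p i | i <- enum 'I_k].

Definition p_first (R : realType) (k : nat) (p : 'I_k -> R) : R :=
  nth 0%R (sorted_probs p) 0.
Definition p_second (R : realType) (k : nat) (p : 'I_k -> R) : R :=
  nth 0%R (sorted_probs p) 1.

Definition is_argmax (R : realType) (k : nat) (p : 'I_k -> R) (i : 'I_k) : Prop :=
  forall j, (p j <= p i)%R.

(* For any positive weights w, Gibbs' inequality gives the variational bound
   d_KL(Q,P) >= sum_l q_l ln w_l - ln (sum_l p_l w_l).  Let i be an argmax of P
   and j <> i an argmax of Q, and take w_i = sqrt (p_j / p_i), w_j = sqrt (p_i / p_j)
   and w_l = 1 otherwise.  Then sum_l q_l ln w_l = (q_j - q_i) ln sqrt (p_i / p_j) >= 0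
   and sum_l p_l w_l = 2 sqrt (p_i p_j) + 1 - p_i - p_j, so d_KL(Q,P) is at least
   -ln (2 sqrt (p_i p_j) + 1 - p_i - p_j).  Finally p_i = p_(1) and p_j <= p_(2) <= p_(1),
   and b |-> 2 sqrt (a b) - b is nondecreasing on [0, a]. *)

From HB Require Import structures.
From mathcomp Require Import all_boot all_order all_algebra.
From mathcomp Require Import all_classical all_reals.
From mathcomp Require Import ereal sequences exp.
From mathcomp Require Import ring lra.
Set Implicit Arguments. Unset Strict Implicit. Unset Printing Implicit Defensive.
Import Order.TTheory GRing.Theory Num.Theory.
Local Open Scope ring_scope.

Section SortedNonincreasing.
Context {d : Order.disp_t} {T : orderType d}.
Local Notation ge := (fun x y : T => (y <= x)%O).

Lemma sorted_ge_head (x y : T) s : sorted ge (x :: s) -> y \in x :: s -> (y <= x)%O.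
Proof.
move=> /(order_path_min ge_trans)/allP hs.
by rewrite inE => /predU1P[-> //|/hs].
Qed.

Lemma nth0_sorted_ge (x0 a : T) s :
  sorted ge s -> a \in s -> {in s, forall y, (y <= a)%O} -> nth x0 s 0 = a.
Proof.
case: s => [//|x s] /= hs ha hmax.
by apply/le_anti; rewrite hmax ?mem_head // (sorted_ge_head hs ha).
Qed.

Lemma nth1_sorted_ge (x0 a b : T) s t :
  sorted ge s -> perm_eq s [:: a, b & t] -> (b <= a)%O -> (b <= nth x0 s 1)%O.
Proof.
case: s => [|x [|x1 s]] hs hp ba; try by have := perm_size hp.
have hs1 : sorted ge (x1 :: s) by case/andP: hs.
have [eax|nax] := eqVneq a x.
  move: hp; rewrite eax perm_cons => hp.
  by apply: sorted_ge_head hs1 _; rewrite (perm_mem hp) mem_head.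
have : a \in [:: x, x1 & s] by rewrite (perm_mem hp) mem_head.
by rewrite inE (negbTE nax) => /(sorted_ge_head hs1); apply: le_trans.
Qed.

End SortedNonincreasing.

Section OrderStatistics.
Context {R : realType} {k : nat} (p : 'I_k -> R).

Lemma perm_sorted_probs : perm_eq (sorted_probs p) [seq p l | l <- enum 'I_k].
Proof. by rewrite /sorted_probs perm_sort. Qed.

Lemma sorted_probs_sorted : sorted (fun x y : R => y <= x) (sorted_probs p).
Proof. by apply: sort_sorted => x y; apply: le_total. Qed.

Lemma p_first_argmax i : is_argmax p i -> p_first p = p i.
Proof.
move=> hi; apply: nth0_sorted_ge sorted_probs_sorted _ _.
  by rewrite (perm_mem perm_sorted_probs) map_f ?mem_enum.
by move=> y; rewrite (perm_mem perm_sorted_probs) => /mapP[l _ ->].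
Qed.

Lemma p_second_ge i j : is_argmax p i -> j != i -> p j <= p_second p.
Proof.
move=> hi ji.
have hperm : perm_eq (sorted_probs p)
    [:: p i, p j & [seq p l | l <- rem j (rem i (enum 'I_k))]].
  apply: perm_trans perm_sorted_probs _.
  apply: (@perm_map _ _ p _ [:: i, j & rem j (rem i (enum 'I_k))]).
  apply: perm_trans (perm_to_rem (mem_enum _ i)) _.
  by rewrite perm_cons perm_to_rem // (rem_mem ji) ?mem_enum.
exact: nth1_sorted_ge sorted_probs_sorted hperm (hi j).
Qed.

Lemma p_second_le_first : (2 <= k)%N -> p_second p <= p_first p.
Proof.
move=> hk; have hsize : size (sorted_probs p) = k.
  by rewrite (perm_size perm_sorted_probs) size_map size_enum_ord.
by apply: (sorted_ltn_nth ge_trans 0 sorted_probs_sorted);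
  rewrite ?inE /= ?hsize ?(ltnW hk).
Qed.

End OrderStatistics.

Section Divergence.
Context {R : realType} {k : nat}.
Implicit Types (p q w : 'I_k -> R) (i j l : 'I_k).

Lemma sumrD2 (F : 'I_k -> R) i j : i != j ->
  \sum_l F l = F i + F j + \sum_(l | (l != i) && (l != j)) F l.
Proof.
move=> ij; rewrite (bigD1 i) //= (bigD1 j) /=; last by rewrite eq_sym.
by rewrite addrA.
Qed.

Lemma distr_add2_le1 p i j : is_distr p -> i != j -> p i + p j <= 1.
Proof.
case=> p0 <- ij; rewrite (sumrD2 _ ij) lerDl.
by apply: sumr_ge0 => l _; apply: p0.
Qed.

Lemma argmax_distr_gt0 p i : is_distr p -> is_argmax p i -> 0 < p i.
Proof.
case=> p0 p1 hi; rewrite lt_def p0 andbT; apply/negP => /eqP pi0.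
suff : \sum_l p l = 0 by rewrite p1 => /eqP; rewrite oner_eq0.
by apply: big1 => l _; apply/le_anti; rewrite p0 -pi0 hi.
Qed.

Lemma dKL_pinfty q p l : 0 < q l -> p l = 0 -> dKL q p = +oo%E.
Proof.
by move=> ql pl; rewrite /dKL; case: existsP => // -[]; exists l; rewrite ql pl eqxx.
Qed.

Lemma distr_sum_mul_gt0 p w : is_distr p -> (forall l, 0 < w l) ->
  0 < \sum_l p l * w l.
Proof.
case=> p0 p1 w0; have pw0 l : 0 <= p l * w l by rewrite mulr_ge0 // ltW.
rewrite lt_def sumr_ge0 // andbT; apply/eqP => /(psumr_eq0P (fun l _ => pw0 l)) pw_eq0.
suff : \sum_l p l = 0 by rewrite p1 => /eqP; rewrite oner_eq0.
apply: big1 => l _; have /eqP := pw_eq0 l isT.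
by rewrite mulf_eq0 (gt_eqF (w0 l)) orbF => /eqP.
Qed.

(* [ln t <= t - 1] at [t = b c / a], multiplied by [a]. *)
Lemma mul_ln_div_ge (a b c : R) : 0 < a -> 0 < b -> 0 < c ->
  a * ln c + a - b * c <= a * ln (a / b).
Proof.
move=> a0 b0 c0.
have x0 : 0 < b * c / a by rewrite !mulr_gt0 ?invr_gt0.
have hln : ln (b * c / a) <= b * c / a - 1.
  by have := @le_ln1Dx R (b * c / a - 1); rewrite [1 + _]addrC subrK; apply; lra.
have := ler_wpM2l (ltW a0) hln.
have -> : a * (b * c / a - 1) = b * c - a by field; rewrite gt_eqF.
rewrite !ln_div ?lnM ?posrE ?mulr_gt0 //; lra.
Qed.

Lemma dKL_ge_variational q p w : is_distr q -> is_distr p -> (forall l, 0 < w l) ->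
  (((\sum_l q l * ln (w l)) - ln (\sum_l p l * w l))%:E <= dKL q p)%E.
Proof.
move=> hq hp w0; case: (hq) (hp) => q0 q1 [p0 _].
rewrite /dKL; case: existsP => [_|hsupp]; first exact: leey.
have supp l : 0 < q l -> 0 < p l.
  move=> ql; rewrite lt_def p0 andbT; apply/negP => /eqP pl.
  by apply: hsupp; exists l; rewrite ql pl eqxx.
set Z := \sum_l p l * w l.
have Z0 : 0 < Z by exact: distr_sum_mul_gt0.
have term l : q l * ln (w l / Z) + q l - p l * (w l / Z)
    <= (if q l == 0 then 0 else q l * ln (q l / p l)).
  have [->|qn0] := eqVneq (q l) 0.
    by rewrite !mul0r add0r subr_le0 mulr_ge0 ?divr_ge0 // ltW.
  have ql : 0 < q l by rewrite lt_def qn0 q0.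
  by apply: mul_ln_div_ge; rewrite ?divr_gt0 ?supp.
rewrite lee_fin; apply: le_trans (ler_sum _ (fun l _ => term l)).
rewrite !sumrB big_split /= q1.
have -> : \sum_l q l * ln (w l / Z) = \sum_l q l * ln (w l) - ln Z.
  rewrite -[ln Z]mul1r -q1 mulr_suml -sumrB.
  by apply: eq_bigr => l _; rewrite ln_div ?posrE // mulrBr.
have -> : \sum_l p l * (w l / Z) = 1.
  by under eq_bigr do rewrite mulrA; rewrite -mulr_suml divff ?gt_eqF.
lra.
Qed.

End Divergence.

Section SwapWeight.
Context {R : realType} {k : nat} (p : 'I_k -> R) (i j : 'I_k).
Hypotheses (ij : i != j) (pi0 : 0 < p i) (pj0 : 0 < p j).

Local Notation s := (Num.sqrt (p i * p j)).

Definition swap_weight (l : 'I_k) : R :=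
  if l == i then s / p i else if l == j then s / p j else 1.

Let s0 : 0 < s. Proof. by rewrite sqrtr_gt0 mulr_gt0. Qed.

Lemma swap_weight_gt0 l : 0 < swap_weight l.
Proof. by rewrite /swap_weight; do 2?case: ifP => _; rewrite ?divr_gt0. Qed.

Let swap_weight_i : swap_weight i = s / p i.
Proof. by rewrite /swap_weight eqxx. Qed.

Let swap_weight_j : swap_weight j = s / p j.
Proof. by rewrite /swap_weight eq_sym (negbTE ij) eqxx. Qed.

Let swap_weight_other l : (l != i) && (l != j) -> swap_weight l = 1.
Proof. by case/andP => /negbTE li /negbTE lj; rewrite /swap_weight li lj. Qed.

Lemma sum_mul_swap_weight : is_distr p ->
  \sum_l p l * swap_weight l = 2 * Num.sqrt (p i * p j) + 1 - p i - p j.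
Proof.
case=> _ p1.
have rest : \sum_(l | (l != i) && (l != j)) p l = 1 - p i - p j.
  by rewrite -p1 (sumrD2 _ ij); lra.
rewrite (sumrD2 _ ij) swap_weight_i swap_weight_j.
under eq_bigr => l hl do rewrite swap_weight_other // mulr1.
rewrite rest [p i * _]mulrC [p j * _]mulrC !divfK ?gt_eqF //; lra.
Qed.

Lemma sum_ln_swap_weight_ge0 (q : 'I_k -> R) : p j <= p i -> q i <= q j ->
  0 <= \sum_l q l * ln (swap_weight l).
Proof.
move=> pji qij.
rewrite (sumrD2 _ ij) swap_weight_i swap_weight_j.
under eq_bigr => l hl do rewrite swap_weight_other // ln1 mulr0.
rewrite big1 // addr0.
have -> : s / p i = (s / p j)^-1.
  rewrite invf_div; apply/eqP; rewrite eqr_div ?(gt_eqF pi0) ?(gt_eqF s0) //.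
  by rewrite -expr2 sqr_sqrtr ?mulr_ge0 ?ltW // mulrC.
have : 0 <= ln (s / p j).
  apply: ln_ge0; rewrite ler_pdivlMr // mul1r.
  rewrite -{1}(ger0_norm (ltW pj0)) -sqrtr_sqr ler_sqrt; last by rewrite mulr_ge0 // ltW.
  by rewrite expr2 ler_pM2r.
by rewrite lnV ?posrE ?divr_gt0 // mulrN addrC -mulrBl => hL; rewrite mulr_ge0 ?subr_ge0.
Qed.

End SwapWeight.

Lemma neglog_le (R : realType) (x y : R) : 0 <= x <= y -> (neglog y <= neglog x)%E.
Proof.
case/andP; rewrite le_eqVlt => /predU1P[<- _|x0 xy]; first by rewrite /neglog eqxx leey.
have y0 := lt_le_trans x0 xy.
by rewrite /neglog !gt_eqF // lee_fin lerN2 ler_ln.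
Qed.

Lemma two_sqrt_mul_subr_le (R : rcfType) (a b x : R) : 0 <= b -> b <= x -> x <= a ->
  2 * Num.sqrt (a * b) - b <= 2 * Num.sqrt (a * x) - x.
Proof.
move=> b0 bx xa.
have x0 := le_trans b0 bx; have a0 := le_trans x0 xa.
rewrite !sqrtrM //.
have sbx : Num.sqrt b <= Num.sqrt x by rewrite ler_sqrt.
have sxa : Num.sqrt x <= Num.sqrt a by rewrite ler_sqrt.
have sb0 := sqrtr_ge0 b.
move: (sqr_sqrtr b0) (sqr_sqrtr x0); rewrite !expr2 => sb sx.
have : 0 <= (Num.sqrt x - Num.sqrt b) * (2 * Num.sqrt a - Num.sqrt b - Num.sqrt x).
  by apply: mulr_ge0; lra.
nra.
Qed.

Lemma dKL_ge_neglog_swap (R : realType) (k : nat) (q p : 'I_k -> R) (i j : 'I_k) :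
  is_distr q -> is_distr p -> i != j -> p j <= p i -> q i <= q j -> 0 < q j ->
  (neglog (2 * Num.sqrt (p i * p j) + 1 - p i - p j) <= dKL q p)%E.
Proof.
move=> hq hp ij pji qij qj0.
have [pj0|pj0] := eqVneq (p j) 0; first by rewrite (dKL_pinfty qj0 pj0) leey.
have {}pj0 : 0 < p j by rewrite lt_def pj0 (proj1 hp).
have pi0 := lt_le_trans pj0 pji.
have Z0 : 0 < 2 * Num.sqrt (p i * p j) + 1 - p i - p j.
  have := distr_add2_le1 hp ij; have : 0 < Num.sqrt (p i * p j).
    by rewrite sqrtr_gt0 mulr_gt0.
  lra.
apply: le_trans (dKL_ge_variational hq hp (swap_weight_gt0 pi0 pj0)).
rewrite /neglog gt_eqF // lee_fin (sum_mul_swap_weight ij pi0 pj0 hp) -{1}[- ln _]add0r.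
by rewrite lerD2r sum_ln_swap_weight_ge0.
Qed.

Local Open Scope ereal_scope.

Theorem mainTheorem1 (R : realType) (k : nat) (hk : (2 <= k)%N)
  (p q : 'I_k -> R) (hp : is_distr p) (hq : is_distr q)
  (hmax : exists i j : 'I_k, [/\ is_argmax p i, is_argmax q j & i != j]) :
  neglog (2 * Num.sqrt (p_first p * p_second p) + 1 - p_first p - p_second p)%R
    <= dKL q p.
Proof.
case: hmax => i [j [hi hj ij]].
have first_eq := p_first_argmax hi.
have j_le_second : (p j <= p_second p)%R by apply: p_second_ge hi _; rewrite eq_sym.
have second_le_first := p_second_le_first p hk.
apply: le_trans (dKL_ge_neglog_swap hq hp ij (hi j) (hj i) (argmax_distr_gt0 hq hj)).
apply: neglog_le; apply/andP; split.
  have := distr_add2_le1 hp ij; have := sqrtr_ge0 (p i * p j); lra.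
rewrite first_eq in second_le_first *.
have := two_sqrt_mul_subr_le (proj1 hp j) j_le_second second_le_first.
lra.
Qed.
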